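(* Let $t\ge0$, $h\ge0$ and $i$ be integers with $-t\le i\le h$. Let $\Phi(z)=\sum_{n\ge0}c_nz^n$, where $c_n$ is the number of Deutsch paths of $n$ steps from $(0,0)$ to $(n,i)$ that stay within levels $-t,\dots,h$ throughout. Let $v=v(z)$ be the power series with $v(0)=0$ satisfying $z=\frac{v}{1+v+v^2}$. Then $$\Phi(z)=\frac{(1+v)^{-i-2}(1-v^{i+t+1})\,v\,(1-v^{h+1})(1+v+v^2)}{(1-v)(1-v^{h+t+3})}\quad\text{for } i<0,$$ $$\Phi(z)=\frac{v^{i}(1-v^{t+2})(1-v^{2-i+h})(1+v+v^2)}{(1-v)(1+v)^{i+2}(1-v^{h+t+3})}\quad\text{for } i\ge0.$$
   Context: A Deutsch path is a lattice path whose steps are up-steps $(1,1)$ and down-steps $(1,-k)$ for any integer $k\ge1$. The series $v$ is given explicitly by $v=\frac{1-z-\sqrt{1-2z-3z^2}}{2z}$. *)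

From Stdlib Require Import Reals ZArith List.
From Coquelicot Require Import Coquelicot.
Open Scope R_scope.

(* A Deutsch step: an up-step (+1) or a down-step (-k) with k >= 1.
   A path is recorded by the list of the vertical displacements of its steps. *)
Definition deutsch_step (s : Z) : Prop := s = 1%Z \/ (s <= -1)%Z.

Fixpoint stays_within (t h cur : Z) (p : list Z) : Prop :=
  match p with
  | nil => True
  | s :: p' => (- t <= cur + s <= h)%Z /\ stays_within t h (cur + s)%Z p'
  end.

(* p is a Deutsch path of n steps from (0,0) to (n,i) staying within
   levels -t..h throughout (the start level 0 is in range since t,h >= 0) *)
Definition bounded_deutsch_path (t h i : Z) (n : nat) (p : list Z) : Prop :=
  length p = n /\ List.Forall deutsch_step p /\ stays_within t h 0%Z p
  /\ fold_right Z.add 0%Z p = i.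

(* the series v, given explicitly (for z <> 0) *)
Definition v_fun (z : R) : R := (1 - z - sqrt (1 - 2 * z - 3 * z ^ 2)) / (2 * z).

(* Decomposing a bounded Deutsch path by its last step, the numbers a_n(j) of such paths
   ending at level j satisfy a_(n+1)(j) = a_n(j-1) + sum_(j<x<=h) a_n(x) for -t <= j <= h,
   and a_n(j) <= (h+t+1)^n.  Hence for |z| < 1/(h+t+1) the generating functions X_j converge
   and solve the linear system X_j = [j=0] + z (X_(j-1) + sum_(j<x<=h) X_x) with X_(-t-1) = 0;
   the difference of two solutions is a fixed point of a contraction, so the solution is
   unique.  Subtracting the equations at j and j+1 gives a three-term recurrence whose
   characteristic roots are 1/(1+v) and v/(1+v) when z = v/(1+v+v^2), and the claimed formula
   is the combination of these geometric sequences meeting the boundary conditions at -t-1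
   and h; checking this is a field computation. *)

From Stdlib Require Import Reals ZArith List Permutation Lia Lra.
From Coquelicot Require Import Coquelicot.
Open Scope R_scope.

Lemma NoDup_flat_map (A B : Type) (f : A -> list B) (l : list A) :
  NoDup l -> (forall x, In x l -> NoDup (f x)) ->
  (forall x y b, In x l -> In y l -> In b (f x) -> In b (f y) -> x = y) ->
  NoDup (flat_map f l).
Proof.
  induction 1 as [|x l Hx Hl IH]; intros Hf Hdisj; simpl; [constructor|].
  apply NoDup_app.
  - apply Hf; simpl; auto.
  - apply IH; [intros; apply Hf | intros; eapply Hdisj]; simpl; eauto.
  - intros b Hb Hb'. apply in_flat_map in Hb' as [y [Hy Hby]].
    assert (x = y) by (apply (Hdisj x y b); simpl; auto). subst. contradiction.
Qed.

Lemma list_sum_map_le (A : Type) (f : A -> nat) l B :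
  (forall x, In x l -> f x <= B)%nat -> (list_sum (map f l) <= length l * B)%nat.
Proof.
  induction l as [|x l IH]; intro Hf; simpl; [lia|].
  specialize (Hf x (or_introl eq_refl)) as Hx.
  specialize (IH (fun y Hy => Hf y (or_intror Hy))). lia.
Qed.

Definition sum_list (l : list R) : R := fold_right Rplus 0 l.

Lemma INR_list_sum l : INR (list_sum l) = sum_list (map INR l).
Proof. induction l as [|x l IH]; simpl; [reflexivity|]. now rewrite plus_INR, IH. Qed.

Lemma sum_list_map_mult_r (A : Type) (g : A -> R) l c :
  sum_list (map g l) * c = sum_list (map (fun x => g x * c) l).
Proof. induction l as [|x l IH]; simpl; [ring|]. rewrite <- IH. ring. Qed.

Lemma sum_list_map_minus (A : Type) (f g : A -> R) l :
  sum_list (map f l) - sum_list (map g l) = sum_list (map (fun x => f x - g x) l).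
Proof. induction l as [|x l IH]; simpl; [ring|]. rewrite <- IH. ring. Qed.

Lemma Rabs_sum_list_map_le (A : Type) (g : A -> R) l B :
  (forall x, In x l -> Rabs (g x) <= B) -> Rabs (sum_list (map g l)) <= INR (length l) * B.
Proof.
  induction l as [|x l IH]; intro Hg.
  - simpl. rewrite Rabs_R0. lra.
  - change (Rabs (g x + sum_list (map g l)) <= INR (S (length l)) * B).
    rewrite S_INR. specialize (Hg x (or_introl eq_refl)) as Hx.
    specialize (IH (fun y Hy => Hg y (or_intror Hy))).
    pose proof (Rabs_triang (g x) (sum_list (map g l))). lra.
Qed.

Lemma is_series_0 : is_series (fun _ : nat => 0) 0.
Proof.
  apply (filterlim_ext (fun _ => 0)); [|apply filterlim_const].
  intro n. induction n as [|n IH]; [now rewrite sum_O|].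
  rewrite sum_Sn, <- IH. exact (eq_sym (plus_zero_r _)).
Qed.

Lemma is_series_sum_list (A : Type) (a : A -> nat -> R) (L : A -> R) l :
  (forall x, In x l -> is_series (a x) (L x)) ->
  is_series (fun n => sum_list (map (fun x => a x n) l)) (sum_list (map L l)).
Proof.
  induction l as [|x l IH]; intro Ha; simpl; [apply is_series_0|].
  apply (is_series_plus (a x)); auto with datatypes.
Qed.

Lemma fold_Rmax_ub l x : In x l -> x <= fold_right Rmax 0 l.
Proof.
  induction l as [|y l IH]; simpl; [tauto|]. intros [->|Hx].
  - apply Rmax_l.
  - eapply Rle_trans; [apply IH, Hx | apply Rmax_r].
Qed.

Lemma fold_Rmax_lub l B : 0 <= B -> (forall x, In x l -> x <= B) -> fold_right Rmax 0 l <= B.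
Proof.
  intros HB Hl. induction l as [|y l IH]; simpl; [exact HB|].
  apply Rmax_lub; auto with datatypes.
Qed.

Lemma fold_Rmax_nonneg l : 0 <= fold_right Rmax 0 l.
Proof. induction l; simpl; [lra|]. eapply Rle_trans; [exact IHl | apply Rmax_r]. Qed.

Lemma contraction_eq0 (A : Type) (L : list A) (D : A -> R) q : 0 <= q < 1 ->
  (forall M, 0 <= M -> (forall x, In x L -> Rabs (D x) <= M) ->
     forall x, In x L -> Rabs (D x) <= q * M) ->
  forall x, In x L -> D x = 0.
Proof.
  intros Hq HD.
  set (M := fold_right Rmax 0 (map (fun x => Rabs (D x)) L)).
  assert (HM0 : 0 <= M) by apply fold_Rmax_nonneg.
  assert (HM : forall x, In x L -> Rabs (D x) <= M).
  { intros x Hx. apply fold_Rmax_ub, (in_map (fun y => Rabs (D y))), Hx. }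
  assert (HqM : M <= q * M).
  { apply fold_Rmax_lub; [nra|]. intros a Ha. apply in_map_iff in Ha as [x [<- Hx]].
    exact (HD M HM0 HM x Hx). }
  intros x Hx. apply Rabs_eq_0. pose proof (HM x Hx). pose proof (Rabs_pos (D x)). nra.
Qed.

Lemma one_minus_powerRZ_neq0 v n : Rabs v < 1 -> (0 < n)%Z -> 1 - powerRZ v n <> 0.
Proof.
  intros Hv Hn E. replace n with (Z.of_nat (Z.to_nat n)) in E by lia.
  rewrite <- pow_powerRZ in E.
  assert (Hlt : Rabs v ^ Z.to_nat n < 1)
    by (apply pow_lt_1_compat; [split; [apply Rabs_pos | exact Hv] | lia]).
  rewrite RPow_abs, (Rminus_diag_uniq_sym _ _ E), Rabs_R1 in Hlt. lra.
Qed.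

(** * Bounded Deutsch paths *)

Definition in_band (t h j : Z) : bool := andb (- t <=? j)%Z (j <=? h)%Z.

Lemma in_bandP t h j : in_band t h j = true <-> (- t <= j <= h)%Z.
Proof. unfold in_band. rewrite Bool.andb_true_iff, !Z.leb_le. tauto. Qed.

Fixpoint levels_above (j : Z) (m : nat) : list Z :=
  match m with
  | O => nil
  | S m => (j + 1)%Z :: levels_above (j + 1) m
  end.

Lemma In_levels_above j m x :
  In x (levels_above j m) <-> (j < x <= j + Z.of_nat m)%Z.
Proof.
  revert j; induction m as [|m IH]; intro j; simpl.
  - lia.
  - rewrite IH. lia.
Qed.

Lemma NoDup_levels_above j m : NoDup (levels_above j m).
Proof.
  revert j; induction m as [|m IH]; intro j; constructor; auto.
  rewrite In_levels_above. lia.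
Qed.

Lemma length_levels_above j m : length (levels_above j m) = m.
Proof. revert j; induction m; simpl; auto. Qed.

Definition predecessors (h j : Z) : list Z :=
  (j - 1)%Z :: levels_above j (Z.to_nat (h - j)).

Lemma In_predecessors h j x : (j <= h)%Z ->
  In x (predecessors h j) <-> deutsch_step (j - x) /\ (x <= h)%Z.
Proof.
  intro Hj. unfold predecessors, deutsch_step. simpl. rewrite In_levels_above. lia.
Qed.

Lemma NoDup_predecessors h j : NoDup (predecessors h j).
Proof.
  constructor; [|apply NoDup_levels_above]. rewrite In_levels_above. lia.
Qed.

Lemma length_predecessors h j : length (predecessors h j) = S (Z.to_nat (h - j)).
Proof. simpl. now rewrite length_levels_above. Qed.

Lemma fold_right_Zadd_snoc (p : list Z) s :
  fold_right Z.add 0%Z (p ++ s :: nil) = (fold_right Z.add 0 p + s)%Z.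
Proof. induction p; cbn [fold_right app]; lia. Qed.

Lemma stays_within_snoc t h cur p s :
  stays_within t h cur (p ++ s :: nil) <->
  stays_within t h cur p /\ (- t <= cur + fold_right Z.add 0 p + s <= h)%Z.
Proof.
  revert cur; induction p as [|a p IH]; intro cur; simpl.
  - rewrite Z.add_0_r. tauto.
  - rewrite IH, Z.add_assoc. tauto.
Qed.

Lemma stays_within_last t h cur p : (- t <= cur <= h)%Z -> stays_within t h cur p ->
  (- t <= cur + fold_right Z.add 0 p <= h)%Z.
Proof.
  revert cur; induction p as [|a p IH]; intros cur Hc Hs; simpl in *.
  - lia.
  - destruct Hs as [Ha Hp]. specialize (IH _ Ha Hp). lia.
Qed.

Lemma bounded_deutsch_path_O t h j p :
  bounded_deutsch_path t h j 0 p <-> p = nil /\ j = 0%Z.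
Proof.
  unfold bounded_deutsch_path. split.
  - intros [Hl [_ [_ Hs]]]. destruct p; [auto | discriminate].
  - intros [-> ->]. repeat constructor.
Qed.

Lemma bounded_deutsch_path_snoc t h j n q s :
  bounded_deutsch_path t h j (S n) (q ++ s :: nil) <->
  (- t <= j <= h)%Z /\ deutsch_step s /\ bounded_deutsch_path t h (j - s) n q.
Proof.
  unfold bounded_deutsch_path.
  rewrite length_app, Forall_app, stays_within_snoc, fold_right_Zadd_snoc. simpl.
  split.
  - intros (Hl & [Hq Hs] & [Hsq Hlast] & Hsum).
    inversion Hs. repeat split; auto; lia.
  - intros (Hj & Hs & Hl & Hq & Hsq & Hsum).
    repeat split; auto; lia.
Qed.

Definition snoc_all (s : Z) (ps : list (list Z)) : list (list Z) :=
  map (fun p => p ++ s :: nil) ps.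

Lemma In_snoc_all s ps p : In p (snoc_all s ps) <-> exists q, p = q ++ s :: nil /\ In q ps.
Proof. unfold snoc_all. rewrite in_map_iff. firstorder. Qed.

Fixpoint paths (t h : Z) (n : nat) (j : Z) : list (list Z) :=
  match n with
  | O => if (j =? 0)%Z then nil :: nil else nil
  | S n =>
      if in_band t h j
      then flat_map (fun x => snoc_all (j - x) (paths t h n x)) (predecessors h j)
      else nil
  end.

Lemma In_paths t h n j p : (0 <= t)%Z -> (0 <= h)%Z ->
  In p (paths t h n j) <-> bounded_deutsch_path t h j n p.
Proof.
  intros ht hh. revert j p; induction n as [|n IH]; intros j p; cbn [paths].
  - rewrite bounded_deutsch_path_O.
    destruct (Z.eqb_spec j 0); simpl; intuition congruence.
  - assert (Hlevel : forall x q, bounded_deutsch_path t h x n q -> (x <= h)%Z).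
    { intros x q (_ & _ & Hs & <-). apply (stays_within_last t h 0) in Hs; lia. }
    destruct p as [|s q _] using rev_ind.
    + split.
      * destruct (in_band t h j); [|contradiction].
        intros Hin. apply in_flat_map in Hin as [x [_ Hx]].
        apply In_snoc_all in Hx as [q [Hq _]].
        symmetry in Hq. apply app_eq_nil in Hq as [_ Hq]. discriminate.
      * intros [Hl _]. discriminate.
    + rewrite bounded_deutsch_path_snoc.
      destruct (in_band t h j) eqn:Hj.
      * apply in_bandP in Hj. rewrite in_flat_map. split.
        -- intros [x [Hx Hp]]. apply In_snoc_all in Hp as [q' [Hq Hq']].
           apply app_inj_tail in Hq as [-> ->]. apply In_predecessors in Hx as [Hs _]; [|lia].
           apply IH in Hq'. replace (j - (j - x))%Z with x by lia. auto.
        -- intros (_ & Hs & Hq). exists (j - s)%Z. split.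
           ++ apply In_predecessors; [lia|]. split; [now replace (j - (j - s))%Z with s by lia|].
              exact (Hlevel _ _ Hq).
           ++ apply In_snoc_all. exists q. split; [do 2 f_equal; lia | now apply IH].
      * rewrite <- Bool.not_true_iff_false, in_bandP in Hj. simpl. tauto.
Qed.

Lemma NoDup_paths t h n j : NoDup (paths t h n j).
Proof.
  revert j; induction n as [|n IH]; intro j; cbn [paths].
  - destruct (j =? 0)%Z; repeat constructor; auto.
  - destruct (in_band t h j); [|constructor].
    apply NoDup_flat_map; [apply NoDup_predecessors| |].
    + intros x _. apply FinFun.Injective_map_NoDup; [|apply IH].
      intros p q Hpq. now apply app_inj_tail in Hpq as [? _].
    + intros x y p _ _ Hx Hy.
      apply In_snoc_all in Hx as [q [-> _]]. apply In_snoc_all in Hy as [q' [Hq _]].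
      apply app_inj_tail in Hq as [_ Hq]. lia.
Qed.

Definition npaths (t h : Z) (n : nat) (j : Z) : nat := length (paths t h n j).

Lemma length_bounded_paths t h j n l : (0 <= t)%Z -> (0 <= h)%Z -> NoDup l ->
  (forall p, In p l <-> bounded_deutsch_path t h j n p) -> length l = npaths t h n j.
Proof.
  intros ht hh Hl Hp. apply Permutation_length, NoDup_Permutation; [exact Hl | apply NoDup_paths|].
  intro p. rewrite Hp, In_paths; tauto.
Qed.

Lemma npaths_S t h n j : npaths t h (S n) j =
  if in_band t h j then list_sum (map (npaths t h n) (predecessors h j)) else 0%nat.
Proof.
  unfold npaths. cbn [paths]. destruct (in_band t h j); [|reflexivity].
  rewrite length_flat_map. f_equal. apply map_ext. intro x. apply length_map.
Qed.

Lemma npaths_le t h n j : (0 <= t)%Z -> (npaths t h n j <= Z.to_nat (h + t + 1) ^ n)%nat.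
Proof.
  intro ht. revert j; induction n as [|n IH]; intro j.
  - unfold npaths; simpl. destruct (j =? 0)%Z; simpl; lia.
  - rewrite npaths_S. destruct (in_band t h j) eqn:Hj; [|lia]. apply in_bandP in Hj.
    eapply Nat.le_trans; [apply list_sum_map_le; intros; apply IH|].
    rewrite length_predecessors, Nat.pow_succ_r'. apply Nat.mul_le_mono_r. lia.
Qed.

(** * Generating functions *)

Definition delta0 (j : Z) : R := if (j =? 0)%Z then 1 else 0.

Definition level_system (t h : Z) (z : R) (X : Z -> R) : Prop :=
  forall j, (- t <= j <= h)%Z -> X j = delta0 j + z * sum_list (map X (predecessors h j)).

Section GeneratingFunctions.

Variables (t h : Z) (z : R).
Hypotheses (ht : (0 <= t)%Z) (hh : (0 <= h)%Z) (hz : Rabs z * IZR (h + t + 1) < 1).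

Definition paths_gf (j : Z) : R := Series (fun n => INR (npaths t h n j) * z ^ n).

Lemma ex_series_npaths j : ex_series (fun n => INR (npaths t h n j) * z ^ n).
Proof.
  apply ex_series_Rabs.
  apply (@ex_series_le R_AbsRing R_CompleteNormedModule _ (fun n => (IZR (h + t + 1) * Rabs z) ^ n)).
  - intro n. change norm with Rabs. simpl.
    rewrite Rabs_Rabsolu, Rabs_mult, <- RPow_abs, Rpow_mult_distr, Rabs_pos_eq by apply pos_INR.
    apply Rmult_le_compat_r; [apply pow_le, Rabs_pos|].
    replace (IZR (h + t + 1)) with (INR (Z.to_nat (h + t + 1)))
      by (rewrite INR_IZR_INZ, Z2Nat.id by lia; reflexivity).
    rewrite <- pow_INR. apply le_INR, npaths_le, ht.
  - apply ex_series_geom. rewrite Rabs_pos_eq; [lra|].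
    apply Rmult_le_pos; [apply IZR_le; lia | apply Rabs_pos].
Qed.

Lemma paths_gf_level_system : level_system t h z paths_gf.
Proof.
  intros j Hj. unfold paths_gf at 1. rewrite Series_incr_1 by apply ex_series_npaths.
  unfold npaths at 1. cbn [paths pow]. fold (npaths t h 0 j). unfold delta0.
  f_equal; [destruct (j =? 0)%Z; simpl; ring|].
  apply is_series_unique.
  assert (Hs := is_series_sum_list _ (fun x n => INR (npaths t h n x) * z ^ n) paths_gf
                  (predecessors h j) (fun x _ => Series_correct _ (ex_series_npaths x))).
  apply (@is_series_scal_l R_AbsRing R_NormedModule z) in Hs.
  eapply is_series_ext; [|exact Hs].
  intro n. rewrite npaths_S. apply in_bandP in Hj. rewrite Hj, INR_list_sum, map_map.
  change (scal z ?a) with (z * a). rewrite sum_list_map_mult_r. simpl pow.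
  rewrite Rmult_comm, sum_list_map_mult_r. f_equal. apply map_ext. intro x. ring.
Qed.

Lemma paths_gf_out_of_band j : in_band t h j = false -> paths_gf j = 0.
Proof.
  intro Hj. unfold paths_gf.
  rewrite (Series_ext _ (fun _ => 0)); [apply is_series_unique, is_series_0|].
  intro n. destruct n as [|n].
  - unfold npaths. cbn [paths]. destruct (Z.eqb_spec j 0) as [->|]; simpl; [|ring].
    exfalso. rewrite <- Bool.not_true_iff_false, in_bandP in Hj. lia.
  - rewrite npaths_S, Hj. simpl. ring.
Qed.

End GeneratingFunctions.

Lemma level_system_unique t h z X Y : (0 <= t)%Z -> Rabs z * IZR (h + t + 1) < 1 ->
  level_system t h z X -> level_system t h z Y -> X (- t - 1)%Z = Y (- t - 1)%Z ->
  forall j, (- t <= j <= h)%Z -> X j = Y j.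
Proof.
  intros ht Hz HX HY Hbottom j Hj.
  set (L := levels_above (- t - 1) (Z.to_nat (h + t + 1))).
  assert (HL : forall x, In x L <-> (- t <= x <= h)%Z)
    by (intro x; unfold L; rewrite In_levels_above; lia).
  enough (X j - Y j = 0) by lra.
  apply (contraction_eq0 _ L (fun x => X x - Y x) (Rabs z * IZR (h + t + 1))); [| |now apply HL].
  { split; [|exact Hz]. apply Rmult_le_pos; [apply Rabs_pos | apply IZR_le; lia]. }
  intros M HM HD x Hx. apply HL in Hx.
  assert (Hdiff : X x - Y x = z * sum_list (map (fun y => X y - Y y) (predecessors h x)))
    by (rewrite (HX x Hx), (HY x Hx), <- sum_list_map_minus; ring).
  rewrite Hdiff, Rabs_mult, Rmult_assoc. apply Rmult_le_compat_l; [apply Rabs_pos|].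
  eapply Rle_trans; [apply (Rabs_sum_list_map_le _ _ _ M)|].
  - intros y Hy. apply In_predecessors in Hy as [Hs Hyh]; [|lia].
    destruct (Z.eq_dec y (- t - 1)) as [->|Hy].
    + rewrite Hbottom, Rminus_diag, Rabs_R0. exact HM.
    + apply HD, HL. unfold deutsch_step in Hs. lia.
  - rewrite length_predecessors. apply Rmult_le_compat_r; [exact HM|].
    rewrite INR_IZR_INZ. apply IZR_le. lia.
Qed.

Lemma level_system_of_recurrence t h z X :
  (forall j, (- t <= j < h)%Z ->
     X j - X (j + 1)%Z = delta0 j - delta0 (j + 1) + z * (X (j - 1)%Z - X j + X (j + 1)%Z)) ->
  X h = delta0 h + z * X (h - 1)%Z ->
  level_system t h z X.
Proof.
  intros Hrec Htop.
  assert (H : forall m j, (- t <= j <= h)%Z -> Z.to_nat (h - j) = m ->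
            X j = delta0 j + z * (X (j - 1)%Z + sum_list (map X (levels_above j m)))).
  { induction m as [|m IH]; intros j Hj Hm; simpl.
    - replace j with h by lia. rewrite Htop. ring.
    - specialize (IH (j + 1)%Z ltac:(lia) ltac:(lia)).
      replace (j + 1 - 1)%Z with j in IH by ring.
      specialize (Hrec j ltac:(lia)). lra. }
  intros j Hj. apply (H (Z.to_nat (h - j))); [exact Hj | reflexivity].
Qed.

(** * The closed form *)

Section ClosedForm.

Variables (t h : Z) (v : R).

Definition closed_form (j : Z) : R :=
  if (j <? 0)%Z then
    powerRZ (1 + v) (- j - 2) * (1 - powerRZ v (j + t + 1)) * v
      * (1 - powerRZ v (h + 1)) * (1 + v + v ^ 2)
    / ((1 - v) * (1 - powerRZ v (h + t + 3)))
  else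
    powerRZ v j * (1 - powerRZ v (t + 2)) * (1 - powerRZ v (2 - j + h))
      * (1 + v + v ^ 2)
    / ((1 - v) * powerRZ (1 + v) (j + 2) * (1 - powerRZ v (h + t + 3))).

Lemma closed_form_bottom : (0 <= t)%Z -> closed_form (- t - 1) = 0.
Proof.
  intro ht. unfold closed_form. rewrite (proj2 (Z.ltb_lt _ 0)) by lia.
  replace (- t - 1 + t + 1)%Z with 0%Z by ring. simpl. unfold Rdiv. ring.
Qed.

Hypotheses (hv : v <> 0) (hv1 : 1 + v <> 0) (hv2 : 1 - v <> 0) (hq : 1 + v + v ^ 2 <> 0)
  (hd : 1 - powerRZ v (h + t + 3) <> 0).

Ltac decide_signs :=
  repeat match goal with
  | |- context [(?a <? 0)%Z] =>
      first [rewrite (proj2 (Z.ltb_lt a 0)) by lia | rewrite (proj2 (Z.ltb_ge a 0)) by lia]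
  | |- context [(?a =? 0)%Z] =>
      first [rewrite (proj2 (Z.eqb_eq a 0)) by lia | rewrite (proj2 (Z.eqb_neq a 0)) by lia]
  end.

Ltac expand_powers :=
  unfold Z.sub in *;
  repeat (rewrite ?Z.opp_add_distr, ?Z.opp_involutive in *;
          rewrite ?(powerRZ_add v), ?(powerRZ_add (1 + v)) in * by assumption;
          rewrite ?powerRZ_neg' in * ).

Ltac nonzero :=
  match goal with
  | |- powerRZ _ _ <> 0 => apply powerRZ_NOR; assumption
  | H : ?b <> 0 |- ?a <> 0 => replace a with b by ring; exact H
  end.

Ltac verify :=
  unfold closed_form, delta0; decide_signs; expand_powers; simpl in *;
  field; repeat split; nonzero.

Lemma closed_form_recurrence j :
  closed_form j - closed_form (j + 1) = delta0 j - delta0 (j + 1)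
  + v / (1 + v + v ^ 2) * (closed_form (j - 1) - closed_form j + closed_form (j + 1)).
Proof.
  (* Only for j = -1 and j = 0 do j-1, j, j+1 straddle both branches of [closed_form]. *)
  assert (Hcases : (j < -1)%Z \/ j = (-1)%Z \/ j = 0%Z \/ (0 < j)%Z) by lia.
  destruct Hcases as [Hj|[->|[->|Hj]]]; verify.
Qed.

Lemma closed_form_top : (0 <= h)%Z ->
  closed_form h = delta0 h + v / (1 + v + v ^ 2) * closed_form (h - 1).
Proof.
  intro hh. destruct (Z.eq_dec h 0) as [Hh|Hh].
  - unfold closed_form. rewrite Hh in *. verify.
  - verify.
Qed.

Lemma closed_form_level_system : (0 <= h)%Z ->
  level_system t h (v / (1 + v + v ^ 2)) closed_form.
Proof.
  intro hh. apply level_system_of_recurrence.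
  - intros j _. apply closed_form_recurrence.
  - apply closed_form_top, hh.
Qed.

End ClosedForm.

Lemma v_fun_equation z : z <> 0 -> 0 <= 1 - 2 * z - 3 * z ^ 2 ->
  z * (1 + v_fun z + v_fun z ^ 2) = v_fun z.
Proof.
  intros Hz HD. set (s := sqrt (1 - 2 * z - 3 * z ^ 2)).
  assert (Hs : s * s = 1 - 2 * z - 3 * z ^ 2) by apply sqrt_sqrt, HD.
  assert (Hv : v_fun z * (2 * z) = 1 - z - s) by (unfold v_fun; fold s; field; exact Hz).
  apply (Rmult_eq_reg_l (4 * z)); [|lra].
  transitivity (4 * z ^ 2 + 2 * z * (v_fun z * (2 * z)) + (v_fun z * (2 * z)) ^ 2); [ring|].
  transitivity (2 * (v_fun z * (2 * z))); [|ring].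
  rewrite Hv. nra.
Qed.

Lemma v_fun_small z : 0 < Rabs z < 1 / 10 -> v_fun z <> 0 /\ Rabs (v_fun z) < 1 / 2.
Proof.
  intros Hz. set (v := v_fun z).
  assert (Hz0 : z <> 0) by (intro E; rewrite E, Rabs_R0 in Hz; lra).
  assert (Hzb : - (1 / 10) < z < 1 / 10) by (destruct (Rabs_def2 z (1 / 10)); lra).
  set (s := sqrt (1 - 2 * z - 3 * z ^ 2)).
  assert (Hs : s * s = 1 - 2 * z - 3 * z ^ 2) by (apply sqrt_sqrt; nra).
  assert (Hs0 : 0 <= s) by apply sqrt_pos.
  assert (Hs1 : 1 / 2 <= s) by nra.
  (* rationalising the numerator: v = 2 z / (1 - z + s) *)
  assert (Hv : v * (1 - z + s) = 2 * z).
  { apply (Rmult_eq_reg_l (2 * z)); [|lra].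
    transitivity (v * (2 * z) * (1 - z + s)); [ring|].
    replace (v * (2 * z)) with (1 - z - s) by (unfold v, v_fun; fold s; field; exact Hz0).
    nra. }
  split.
  - intro E. rewrite E in Hv. lra.
  - assert (Habs : Rabs v * (1 - z + s) = 2 * Rabs z).
    { rewrite <- (Rabs_pos_eq (1 - z + s)) by lra.
      rewrite <- Rabs_mult, Hv, Rabs_mult, Rabs_pos_eq; lra. }
    pose proof (Rabs_pos v). nra.
Qed.

Lemma paths_gf_eq_closed_form t h z j : (0 <= t)%Z -> (0 <= h)%Z ->
  0 < Rabs z < 1 / 10 -> Rabs z * IZR (h + t + 1) < 1 -> (- t <= j <= h)%Z ->
  paths_gf t h z j = closed_form t h (v_fun z) j.
Proof.
  intros ht hh Hz Hzw Hj. set (v := v_fun z).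
  destruct (v_fun_small z Hz) as [Hv0 Hv]. fold v in Hv0, Hv.
  assert (Hz0 : z <> 0) by (intro E; rewrite E, Rabs_R0 in Hz; lra).
  assert (Hzb : - (1 / 10) < z < 1 / 10) by (destruct (Rabs_def2 z (1 / 10)); lra).
  assert (Hvz : z * (1 + v + v ^ 2) = v) by (apply v_fun_equation; [exact Hz0 | nra]).
  apply Rabs_def2 in Hv as Hvb.
  assert (Hq : 1 + v + v ^ 2 <> 0) by nra.
  assert (HY : level_system t h z (closed_form t h v)).
  { assert (Hzv : z = v / (1 + v + v ^ 2)).
    { apply (Rmult_eq_reg_r (1 + v + v ^ 2)); [|exact Hq]. rewrite Hvz. field. exact Hq. }
    rewrite Hzv.
    apply closed_form_level_system; [exact Hv0 | lra | lra | exact Hq | | exact hh].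
    apply one_minus_powerRZ_neq0; [lra | lia]. }
  apply (level_system_unique t h z); auto.
  - apply paths_gf_level_system; assumption.
  - rewrite closed_form_bottom by exact ht. apply paths_gf_out_of_band; try assumption.
    apply Bool.not_true_iff_false. rewrite in_bandP. lia.
Qed.

Theorem theorem5 (t h i : Z) (ht : (0 <= t)%Z) (hh : (0 <= h)%Z)
  (hi : (- t <= i <= h)%Z) (c : nat -> nat)
  (Hc : forall n : nat, exists l : list (list Z),
          NoDup l /\ (forall p, In p l <-> bounded_deutsch_path t h i n p)
          /\ c n = length l) :
  exists r : R, 0 < r /\
    forall z : R, 0 < Rabs z < r ->
      let v := v_fun z in
      ((i < 0)%Z ->
        is_series (fun n => INR (c n) * z ^ n)
          (powerRZ (1 + v) (- i - 2) * (1 - powerRZ v (i + t + 1)) * v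
             * (1 - powerRZ v (h + 1)) * (1 + v + v ^ 2)
           / ((1 - v) * (1 - powerRZ v (h + t + 3)))))
      /\
      ((0 <= i)%Z ->
        is_series (fun n => INR (c n) * z ^ n)
          (powerRZ v i * (1 - powerRZ v (t + 2)) * (1 - powerRZ v (2 - i + h))
             * (1 + v + v ^ 2)
           / ((1 - v) * powerRZ (1 + v) (i + 2) * (1 - powerRZ v (h + t + 3))))).
Proof.
  assert (Hw : 1 <= IZR (h + t + 1)) by (apply IZR_le; lia).
  exists (/ (10 * IZR (h + t + 1))). split; [apply Rinv_0_lt_compat; lra|].
  intros z Hz. cbv zeta.
  assert (Hz10w : Rabs z * (10 * IZR (h + t + 1)) < 1).
  { rewrite <- (Rinv_l (10 * IZR (h + t + 1))) by lra. apply Rmult_lt_compat_r; lra. }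
  assert (Hz10 : 0 < Rabs z < 1 / 10) by nra.
  assert (Hzw : Rabs z * IZR (h + t + 1) < 1) by nra.
  assert (Hser : is_series (fun n => INR (c n) * z ^ n) (closed_form t h (v_fun z) i)).
  { rewrite <- paths_gf_eq_closed_form by assumption.
    eapply is_series_ext; [|apply Series_correct, ex_series_npaths; assumption].
    intro n. destruct (Hc n) as (l & Hnd & Hl & ->).
    now rewrite (length_bounded_paths t h i n l). }
  unfold closed_form in Hser. split; intro Hi.
  - now rewrite (proj2 (Z.ltb_lt i 0) Hi) in Hser.
  - now rewrite (proj2 (Z.ltb_ge i 0) Hi) in Hser.
Qed.
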